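(* Let $n\ge 2$ be an integer and $A\subseteq L_n$. The subspace $(L_n,\tau(A)|_{L_n})$ of $(X_n,\tau(A))$ is perfect if and only if $A$ is a $G_\delta$-set in $(L_n,\tau_E|_{L_n})$.
   Context: For $\overline{x},\overline{a}\in\mathbb R^n$ let $|\overline{x}-\overline{a}|$ be the Euclidean distance and $B(\overline{a},\epsilon)=\{\overline{x}\in\mathbb R^n:|\overline{x}-\overline{a}|<\epsilon\}$. Let $P_n=\{\overline{x}\in\mathbb R^n: x_n>0\}$, $L_n=\{\overline{x}\in\mathbb R^n: x_n=0\}$, $X_n=P_n\cup L_n$, and let $\tau_E$ denote the Euclidean topology on $X_n$. For $\overline{a}\in L_n$ and $\epsilon>0$ put $\overline{a(\epsilon)}=(a_1,\dots,a_{n-1},\epsilon)$ and $\tilde B(\overline{a},\epsilon)=\{\overline{a}\}\cup B(\overline{a(\epsilon)},\epsilon)$. For $A\subseteq L_n$, the topology $\tau(A)$ on $X_n$ is generated by the local bases: at $\overline{a}\in P_n$, the sets $B(\overline{a},\epsilon)$ with $0<\epsilon<a_n$; at $\overline{a}\in A$, the sets $B(\overline{a},\epsilon)\cap X_n$ with $\epsilon>0$; at $\overline{a}\in L_n\setminus A$, the sets $\tilde B(\overline{a},\epsilon)$ with $\epsilon>0$. (Equivalently, $\tau(A)|_{L_n}$ is the topology on $L_n$ whose open sets are the sets $U\cup D$ with $U$ Euclidean-open in $L_n$ and $D\subseteq L_n\setminus A$.) A space is perfect if every closed set is a $G_\delta$-set. *)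

From mathcomp Require Import all_boot all_order all_algebra.
From mathcomp Require Import boolp classical_sets reals.
Set Implicit Arguments. Unset Strict Implicit. Unset Printing Implicit Defensive.
Import Order.TTheory GRing.Theory Num.Theory.
Local Open Scope ring_scope.
Local Open Scope classical_set_scope.

(* Points of R^(n+1) are functions 'I_n.+1 -> R; the last coordinate
   x_{n+1} is  x ord_max. *)
Section Defs.
Variables (R : realType) (n : nat).
Notation pt := ('I_n.+1 -> R).

Definition edist (x a : pt) : R := Num.sqrt (\sum_(i < n.+1) (x i - a i) ^+ 2).

Definition eball (a : pt) (eps : R) : set pt := [set x | edist x a < eps].

Definition Pn : set pt := [set x | 0 < x ord_max].
Definition Ln : set pt := [set x | x ord_max = 0].
Definition Xn : set pt := Pn `|` Ln.

Definition shift_up (a : pt) (eps : R) : pt :=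
  fun i => if i == ord_max then eps else a i.

Definition tball (a : pt) (eps : R) : set pt :=
  [set a] `|` eball (shift_up a eps) eps.

Definition tau_base (A : set pt) (a : pt) (N : set pt) : Prop :=
  (Pn a /\ exists eps, 0 < eps /\ eps < a ord_max /\ N = eball a eps)
  \/ (A a /\ exists eps, 0 < eps /\ N = eball a eps `&` Xn)
  \/ ((Ln `\` A) a /\ exists eps, 0 < eps /\ N = tball a eps).

Definition tau_open (A : set pt) (O : set pt) : Prop :=
  O `<=` Xn /\ forall a, O a -> exists N, tau_base A a N /\ N `<=` O.

Definition tauL_open (A : set pt) (V : set pt) : Prop :=
  exists O, tau_open A O /\ V = O `&` Ln.

Definition tauL_closed (A : set pt) (C : set pt) : Prop :=
  C `<=` Ln /\ tauL_open A (Ln `\` C).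

Definition tauL_Gdelta (A : set pt) (C : set pt) : Prop :=
  exists V : nat -> set pt, (forall k, tauL_open A (V k)) /\ C = \bigcap_k V k.

Definition tauL_perfect (A : set pt) : Prop :=
  forall C, tauL_closed A C -> tauL_Gdelta A C.

Definition eopen (O : set pt) : Prop :=
  forall x, O x -> exists eps, 0 < eps /\ eball x eps `<=` O.

Definition eL_open (V : set pt) : Prop := exists O, eopen O /\ V = O `&` Ln.

Definition eL_Gdelta (C : set pt) : Prop :=
  exists V : nat -> set pt, (forall k, eL_open (V k)) /\ C = \bigcap_k V k.

End Defs.

From mathcomp Require Import all_boot all_order all_algebra.
From mathcomp Require Import boolp classical_sets reals.
From mathcomp Require Import ring lra.
Set Implicit Arguments. Unset Strict Implicit. Unset Printing Implicit Defensive.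
Import Order.TTheory GRing.Theory Num.Theory.
Local Open Scope ring_scope.
Local Open Scope classical_set_scope.

(* The points of L_n outside A are isolated from L_n in tau(A), so the
   tau(A)|L_n-open sets are exactly the subsets V of L_n that are Euclidean
   neighbourhoods in L_n of each of their points lying in A.
   If the subspace is perfect, then A itself, which is closed there, is an
   intersection of such sets V_k; the Euclidean interiors of the V_k in L_n
   still contain A, so A is a Euclidean G_delta.
   Conversely, if A = \bigcap_k W_k with W_k Euclidean open, a closed set C is
   the intersection of the open sets C u (W_k n U_k), where U_k is the
   Euclidean 1/(k+1)-neighbourhood of C: a point of A outside C has a
   Euclidean neighbourhood in L_n missing C, hence lies outside some U_k. *)

Section SumOfSquares.
Variables (R : realType) (k : nat).
Implicit Types u v : 'I_k -> R.

Lemma sum_sqr_ge0 u : 0 <= \sum_(i < k) u i ^+ 2.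
Proof. by rewrite sumr_ge0 // => i _; rewrite sqr_ge0. Qed.

Lemma sum_sqr_eq0 u : \sum_(i < k) u i ^+ 2 = 0 -> forall i, u i = 0.
Proof.
move=> /psumr_eq0P u0 i; apply/eqP; rewrite -sqrf_eq0; apply/eqP.
by apply: u0 => // j _; rewrite sqr_ge0.
Qed.

Lemma cauchy_schwarz u v :
  \sum_(i < k) u i * v i <=
  Num.sqrt (\sum_(i < k) u i ^+ 2) * Num.sqrt (\sum_(i < k) v i ^+ 2).
Proof.
set a := Num.sqrt _; set b := Num.sqrt _.
have a2 : a ^+ 2 = \sum_(i < k) u i ^+ 2 by rewrite sqr_sqrtr ?sum_sqr_ge0.
have b2 : b ^+ 2 = \sum_(i < k) v i ^+ 2 by rewrite sqr_sqrtr ?sum_sqr_ge0.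
have [a0|a_neq0] := eqVneq a 0.
  have /sum_sqr_eq0 u0 : \sum_(i < k) u i ^+ 2 = 0 by rewrite -a2 a0 expr0n.
  by rewrite a0 mul0r big1 // => i _; rewrite u0 mul0r.
have [b0|b_neq0] := eqVneq b 0.
  have /sum_sqr_eq0 v0 : \sum_(i < k) v i ^+ 2 = 0 by rewrite -b2 b0 expr0n.
  by rewrite b0 mulr0 big1 // => i _; rewrite v0 mulr0.
have ab_gt0 : 0 < a * b by rewrite mulr_gt0 // lt_def ?a_neq0 ?b_neq0 sqrtr_ge0.
(* expand [0 <= \sum_i (b u_i - a v_i)^2] *)
have : 2 * (a * b) * \sum_(i < k) u i * v i <= 2 * (a ^+ 2 * b ^+ 2).
  have -> : 2 * (a ^+ 2 * b ^+ 2) =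
            \sum_(i < k) (b ^+ 2 * u i ^+ 2 + a ^+ 2 * v i ^+ 2).
    by rewrite big_split /= -!mulr_sumr -a2 -b2; ring.
  rewrite mulr_sumr; apply: ler_sum => i _.
  by have := sqr_ge0 (b * u i - a * v i); nra.
set s := \sum_(i < k) _; nra.
Qed.

Lemma minkowski u v :
  Num.sqrt (\sum_(i < k) (u i + v i) ^+ 2) <=
  Num.sqrt (\sum_(i < k) u i ^+ 2) + Num.sqrt (\sum_(i < k) v i ^+ 2).
Proof.
have := cauchy_schwarz u v.
set a := Num.sqrt (\sum_(i < k) u i ^+ 2).
set b := Num.sqrt (\sum_(i < k) v i ^+ 2) => cs.
have a2 : a ^+ 2 = \sum_(i < k) u i ^+ 2 by rewrite sqr_sqrtr ?sum_sqr_ge0.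
have b2 : b ^+ 2 = \sum_(i < k) v i ^+ 2 by rewrite sqr_sqrtr ?sum_sqr_ge0.
have a_ge0 : 0 <= a := sqrtr_ge0 _.
have b_ge0 : 0 <= b := sqrtr_ge0 _.
rewrite -(ger0_norm (addr_ge0 a_ge0 b_ge0)) -sqrtr_sqr ler_sqrt ?sqr_ge0 //.
have -> : \sum_(i < k) (u i + v i) ^+ 2 =
          a ^+ 2 + 2 * \sum_(i < k) u i * v i + b ^+ 2.
  by rewrite a2 b2 mulr_sumr -!big_split /=; apply: eq_bigr => i _; ring.
set s := \sum_(i < k) _ in cs *; nra.
Qed.

End SumOfSquares.

Section EuclideanDistance.
Variables (R : realType) (n : nat).
Notation pt := ('I_n.+1 -> R).
Implicit Types (x y z a : pt) (eps : R).

Lemma edistxx x : edist x x = 0.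
Proof. by rewrite /edist big1 ?sqrtr0 // => i _; rewrite subrr expr0n. Qed.

Lemma edistC x y : edist x y = edist y x.
Proof. by congr Num.sqrt; apply: eq_bigr => i _; rewrite -sqrrN opprB. Qed.

Lemma edist_triangle x y z : edist x z <= edist x y + edist y z.
Proof.
rewrite /edist (eq_bigr (fun i => ((x i - y i) + (y i - z i)) ^+ 2)).
  exact: minkowski.
by move=> i _; rewrite subrKA.
Qed.

Lemma coord_le_edist x y i : `|x i - y i| <= edist x y.
Proof.
rewrite -sqrtr_sqr ler_sqrt ?sum_sqr_ge0 // (bigD1 i) //= lerDl.
by rewrite sumr_ge0 // => j _; rewrite sqr_ge0.
Qed.

Lemma eball_center a eps : 0 < eps -> eball a eps a.
Proof. by rewrite /eball /= edistxx. Qed.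

Lemma eball_sub x a eps :
  eball a eps x -> eball x (eps - edist x a) `<=` eball a eps.
Proof.
by move=> _ y; rewrite /eball /= => yx; have := edist_triangle y x a; lra.
Qed.

Lemma eopen_eball a eps : eopen (eball a eps).
Proof.
move=> x xa; exists (eps - edist x a); split; last exact: eball_sub.
by rewrite subr_gt0.
Qed.

Lemma eopen_bigcup (I : Type) (D : set I) (O : I -> set pt) :
  (forall i, D i -> eopen (O i)) -> eopen (\bigcup_(i in D) O i).
Proof.
move=> Oopen x [i Di Oix]; have [eps [eps_gt0 sub]] := Oopen i Di x Oix.
by exists eps; split => // y /sub Oiy; exists i.
Qed.

Lemma eball_Pn a eps : eps <= a ord_max -> eball a eps `<=` @Pn R n.
Proof.
move=> le_eps x; rewrite /eball /Pn /= => xa.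
have := le_lt_trans (coord_le_edist x a ord_max) xa.
by rewrite ltr_norml => /andP[+ _]; lra.
Qed.

Lemma Ln_Pn x : @Ln R n x -> ~ @Pn R n x.
Proof. by rewrite /Ln /Pn /= => ->; rewrite ltxx. Qed.

End EuclideanDistance.

Section RelativeTopology.
Variables (R : realType) (n : nat).
Notation pt := ('I_n.+1 -> R).
Notation Ln := (@Ln R n).
Implicit Types (A C V W : set pt) (a : pt).

Definition eL_nbhs V a : Prop :=
  exists2 eps : R, 0 < eps & eball a eps `&` Ln `<=` V.

Lemma eL_nbhs_mem V a : Ln a -> eL_nbhs V a -> V a.
Proof.
by move=> La [eps eps_gt0 sub]; apply: sub; split => //; exact: eball_center.
Qed.

Lemma eL_nbhsI V W a : eL_nbhs V a -> eL_nbhs W a -> eL_nbhs (V `&` W) a.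
Proof.
move=> [e1 e1_gt0 sub1] [e2 e2_gt0 sub2]; exists (Num.min e1 e2).
  by rewrite lt_min e1_gt0.
move=> x [xa Lx]; move: xa; rewrite /eball /= lt_min => /andP[x1 x2].
by split; [apply: sub1 | apply: sub2].
Qed.

Lemma eopen_eL_nbhs (O : set pt) a : eopen O -> O a -> eL_nbhs O a.
Proof.
by move=> Oopen /Oopen[eps [eps_gt0 sub]]; exists eps => // x [/sub].
Qed.

Lemma eL_open_subL V : eL_open V -> V `<=` Ln.
Proof. by move=> [O [_ ->]] x []. Qed.

Lemma eL_open_nbhs V a : eL_open V -> V a -> eL_nbhs V a.
Proof.
move=> [O [Oopen ->]] [Oa La].
have [eps eps_gt0 sub] := eopen_eL_nbhs Oopen Oa.
by exists eps => // x [xa Lx]; split => //; apply: sub.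
Qed.

Lemma eL_open_interior V : eL_open ([set a | eL_nbhs V a] `&` Ln).
Proof.
exists [set a | eL_nbhs V a]; split => // a [eps eps_gt0 sub].
exists eps; split => // x xa.
exists (eps - edist x a); first by rewrite subr_gt0.
by move=> y [/(eball_sub xa) ya Ly]; apply: sub.
Qed.

Lemma tauL_openP A V :
  tauL_open A V <-> V `<=` Ln /\ forall a, V a -> A a -> eL_nbhs V a.
Proof.
split.
  move=> [O [[_ Obase] ->]]; split=> [x []//|a [Oa La] Aa].
  have [N [Nbase NO]] := Obase a Oa.
  case: Nbase NO => [[Pa _]|[[_ [eps [eps_gt0 ->]]] NO|[[_ nAa] _]]] //.
    by have := Ln_Pn La.
  by exists eps => // x [xa Lx]; split => //; apply: NO; split => //; right.
(* V u P_n is tau(A)-open: for a in V \ A, [tball a 1] lies in {a} u P_n *)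
move=> [VL Vnbhs]; exists (V `|` @Pn R n); split; last first.
  apply/seteqP; split=> [x Vx|x [[]// Px /Ln_Pn//]].
  by split; [left | exact: VL].
split=> [x [/VL Lx|Px]|a]; [by right | by left | move=> [Va|Pa]].
- have [Aa|nAa] := pselect (A a).
    have [eps eps_gt0 sub] := Vnbhs a Va Aa.
    exists (eball a eps `&` @Xn R n); split.
      by right; left; split => //; exists eps.
    by move=> x [xa [Px|Lx]]; [right | left; apply: sub].
  exists (tball a 1); split.
    by right; right; split; [split => //; exact: VL | exists 1].
  move=> x [->|xa]; first by left.
  by right; apply: eball_Pn xa; rewrite /shift_up eqxx.
- have a_gt0 : 0 < a ord_max := Pa.
  exists (eball a (a ord_max / 2)); split.
    by left; split => //; exists (a ord_max / 2); split; [|split] => //; lra.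
  by move=> x xa; right; apply: eball_Pn xa; lra.
Qed.

Lemma tauL_closed_self A : A `<=` Ln -> tauL_closed A A.
Proof.
move=> AL; split => //; apply/tauL_openP.
by split=> [x []//|a [_ nAa] /nAa].
Qed.

Lemma eL_Gdelta_tauL_Gdelta_self A :
  A `<=` Ln -> tauL_Gdelta A A -> eL_Gdelta A.
Proof.
move=> AL [V [Vopen AV]].
exists (fun k => [set a | eL_nbhs (V k) a] `&` Ln); split.
  by move=> k; exact: eL_open_interior.
apply/seteqP; split=> [a Aa k _|x xW].
  split; last exact: AL.
  have [_ Vnbhs] := (tauL_openP A (V k)).1 (Vopen k).
  by apply: Vnbhs => //; move: Aa; rewrite AV; apply.
by rewrite AV => k _; have [/eL_nbhs_mem + Lx] := xW k I; apply.
Qed.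

Lemma tauL_open_thicken A C W r :
  C `<=` Ln -> eL_open W -> A `<=` W -> 0 < r ->
  tauL_open A (C `|` (W `&` \bigcup_(c in C) eball c r)).
Proof.
move=> CL Wopen AW r_gt0; apply/tauL_openP; split.
  by move=> x [/CL//|[/(eL_open_subL Wopen)]].
move=> a Va /AW Wa.
have Ua : (\bigcup_(c in C) eball c r) a.
  by case: Va => [Ca|[]//]; exists a => //; exact: eball_center.
have [eps eps_gt0 sub] := eL_nbhsI (eL_open_nbhs Wopen Wa)
  (eopen_eL_nbhs (eopen_bigcup (fun c _ => @eopen_eball _ _ c r)) Ua).
by exists eps => // x /sub WUx; right.
Qed.

Lemma bigcap_thicken A C (W : nat -> set pt) :
  tauL_closed A C -> (forall k, eL_open (W k)) -> \bigcap_k W k `<=` A ->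
  C = \bigcap_k (C `|` (W k `&` \bigcup_(c in C) eball c k.+1%:R^-1)).
Proof.
move=> [CL Copen] Wopen WA.
apply/seteqP; split=> [x Cx k _|x xV]; first by left.
apply: contrapT => nCx.
have WUx k : (W k `&` \bigcup_(c in C) eball c k.+1%:R^-1) x.
  by case: (xV k I).
have Ax : A x by apply: WA => k _; exact: (WUx k).1.
have Lx : Ln x := eL_open_subL (Wopen 0) (WUx 0).1.
have [_ /(_ x (conj Lx nCx) Ax)[eps eps_gt0 sub]] := (tauL_openP A _).1 Copen.
have [k] := ltr_add_invr eps_gt0; rewrite add0r => k_lt_eps.
have [c Cc cx] := (WUx k).2.
suff [] : (Ln `\` C) c by [].
apply: sub; split; last exact: CL.
by rewrite /eball /= edistC; exact: lt_trans cx k_lt_eps.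
Qed.

Lemma eL_Gdelta_tauL_perfect A : eL_Gdelta A -> tauL_perfect A.
Proof.
move=> [W [Wopen AW]] C Cclosed.
exists (fun k => C `|` (W k `&` \bigcup_(c in C) eball c k.+1%:R^-1)); split.
  move=> k; apply: tauL_open_thicken; first exact: Cclosed.1.
  - exact: Wopen.
  - by rewrite AW => x /(_ k I).
  - by rewrite invr_gt0.
by apply: (bigcap_thicken Cclosed Wopen); rewrite AW.
Qed.

End RelativeTopology.

Theorem mainTheorem10 (R : realType) (m : nat) (A : set ('I_m.+2 -> R)) :
  A `<=` @Ln R m.+1 ->
  (tauL_perfect A <-> eL_Gdelta A).
Proof.
move=> AL; split; last exact: eL_Gdelta_tauL_perfect.
move=> perfect; apply: eL_Gdelta_tauL_Gdelta_self => //.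
exact/perfect/tauL_closed_self.
Qed.
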